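(* Let $x$ be a vertex of $\mathcal{B}(G)$, and identify $\bar M_x'$ with $\mathfrak{f}^\times\times\bar M_x$ via the unique splitting of $\bar{\mathbf{M}}_x'\to\bar{\mathbf{M}}_x$. Then every $\epsilon$-genuine depth zero type for $\tilde G$ at $x$ has the form $(x,\epsilon\boxtimes\sigma)$, where $\sigma$ is a cuspidal irreducible representation of $\bar M_x$.
   Context: Let $F$ be a finite extension of $\mathbb{Q}_p$ with $p\neq2$, with valuation ring $\mathcal{O}$ and finite residue field $\mathfrak{f}$. Let $F^{unr}$ be its maximal unramified extension, with residue field $\bar{\mathfrak{f}}$, and let $\Gamma=\mathrm{Gal}(F^{unr}/F)$. Let $\mathbf{G}=\mathbf{Sp}_{2n}$, $G=\mathrm{Sp}_{2n}(F)$, and $G^{unr}=\mathbf{G}(F^{unr})$. Let $\mathcal{B}(G)$ be the Bruhat–Tits building of $G$. For $x\in\mathcal{B}(G)$, $G_x$ is the parahoric subgroup attached to $x$ and $G_x^+$ its pro-unipotent radical; $G_x^{unr}$ and $G_x^{unr,+}$ are the analogous subgroups of $G^{unr}$. Let $\bar{\mathbf{M}}_x$ be the maximal reductive quotient of the special fibre of the Bruhat–Tits $\mathcal{O}$-group scheme attached to $x$, so that $\bar M_x:=\bar{\mathbf{M}}_x(\mathfrak{f})\cong G_x/G_x^+$. For a vertex $x$, $\bar{\mathbf{M}}_x$ is a product of two symplectic groups over $\mathfrak{f}$, hence simply connected. Let $\mathbf{G}'$ be the universal (Matsumoto) central extension of $\mathbf{Sp}_{2n}$ by $\mathcal{K}_2$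 on the big Zariski site of $F$. Pushing forward along the tame symbol gives central extensions $1\to\bar{\mathfrak{f}}^\times\to\tilde G^{unr}\to G^{unr}\to1$ and, on $\Gamma$-fixed points, $1\to\mathfrak{f}^\times\to\tilde G\to G\to1$. Tildes denote preimages. By Deligne–Brylinski, for each $x$ there is a central extension $1\to\bar{\mathbf{G}}_m\to\bar{\mathbf{M}}_x'\to\bar{\mathbf{M}}_x\to1$ over $\mathfrak{f}$ such that $\tilde G_x^{unr}$ is, $\Gamma$-equivariantly, the pullback of $\bar{\mathbf{M}}_x'(\bar{\mathfrak{f}})$ along $G_x^{unr}\to\bar{\mathbf{M}}_x(\bar{\mathfrak{f}})$. The pro-$p$ group $G_x^+$ is regarded as a subgroup of $\tilde G$ via its unique splitting. Then $\tilde G_x/G_x^+\cong\bar M_x':=\bar{\mathbf{M}}_x'(\mathfrak{f})$. For a vertex $x$, the extension $\bar{\mathbf{M}}_x'\to\bar{\mathbf{M}}_x$ splits uniquely. Let $\epsilon\colon\mathfrak{f}^\times\to\{\pm1\}$ be the unique surjective homomorphism. A representation is $\epsilon$-genuine if $\mathfrak{f}^\times$ acts through $\epsilon$. An $\epsilon$-genuine depth zero type at $x$ is a pair $(x,\rho)$ with $\rho$ an $\epsilon$-genuine cuspidal (in the sense of Harish-Chandra) irreducible representation of $\bar M_x'$. *)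

From HB Require Import structures.
From mathcomp Require Import all_boot all_order all_algebra all_fingroup all_field all_character.
Set Implicit Arguments. Unset Strict Implicit. Unset Printing Implicit Defensive.
Import Order.TTheory GRing.Theory Num.Theory.
Local Open Scope ring_scope.

(* Setting: f = F a finite field of odd characteristic; a vertex x of the
   building of Sp_{2n}(F_loc) has reductive quotient
   Mbar_x = Sp_{2a}(f) x Sp_{2b}(f), a + b = n.  We realise it block-diagonally
   inside GL_N(f), N = 2(a+b) (we write N.-1.+1 for the matrix size, the
   convention of {'GL_N[F]}).  Coordinates 0..2a-1 span V_A, 2a..2a+2b-1 span
   V_B; on each block the standard form [[0, I], [-I, 0]]. *)

Section Sp.
Variables (F : finFieldType) (a b : nat).

Definition NN := (2 * (a + b))%N.
Notation d := NN.-1.+1.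

Definition Jblk (m k l : nat) : F :=
  if (k < m)%N && (l == k + m)%N then 1
  else if (l < m)%N && (k == l + m)%N then -1 else 0.

Definition Jmx : 'M[F]_d := \matrix_(i, j)
  if (i < 2 * a)%N && (j < 2 * a)%N then Jblk a i j
  else if (2 * a <= i)%N && (2 * a <= j)%N then Jblk b (i - 2 * a) (j - 2 * a)
  else 0.

Definition EA : 'M[F]_d := \matrix_(i, j) ((i == j) && (i < 2 * a)%N)%:R.
Definition EB : 'M[F]_d := \matrix_(i, j) ((i == j) && (2 * a <= i)%N)%:R.

Definition Mbar : {set {'GL_NN[F]}} :=
  [set g : {'GL_NN[F]} | [&& (val g) *m Jmx *m (val g)^T == Jmx,
                             (EA *m val g <= EA)%MS & (EB *m val g <= EB)%MS]].

Definition perpIn (E W : 'M[F]_d) : 'M[F]_d := (kermx (Jmx *m W^T) :&: E)%MS.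

Definition isoFlag (E : 'M[F]_d) (ws : seq 'M[F]_d) : bool :=
  sorted (fun X Y => (X < Y)%MS) ((0 : 'M[F]_d) :: ws) &&
  all (fun W => (W <= E)%MS && (W *m Jmx *m W^T == 0)) ws.

Definition fullFlag (E : 'M[F]_d) (ws : seq 'M[F]_d) : seq 'M[F]_d :=
  (0 : 'M[F]_d) :: ws ++ map (perpIn E) (rev ws) ++ [:: E].

Definition trivOnFlag (E : 'M[F]_d) (ws : seq 'M[F]_d) (g : 'M[F]_d) : bool :=
  let c := fullFlag E ws in
  all (fun XY => (XY.2 *m (g - 1%:M) <= XY.1)%MS) (zip c (behead c)).

(* Unipotent radical of the parabolic P_A x P_B of Mbar attached to the
   isotropic flags wsA (in V_A) and wsB (in V_B). *)
Definition unipRad (wsA wsB : seq 'M[F]_d) : {set {'GL_NN[F]}} :=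
  [set g in Mbar | trivOnFlag EA wsA (val g) && trivOnFlag EB wsB (val g)].

Definition properFlags (wsA wsB : seq 'M[F]_d) : Prop :=
  [/\ isoFlag EA wsA, isoFlag EB wsB & (0 < size wsA + size wsB)%N].

Definition cuspidalM (G : {group {'GL_NN[F]}}) n
    (sigma : mx_representation algC G n) : Prop :=
  forall wsA wsB, properFlags wsA wsB -> rfix_mx sigma (unipRad wsA wsB) = 0.

(* Mbar'_x = f^x x Mbar_x (split extension); its proper parabolics are
   f^x x P, with unipotent radicals 1 x U *)
Definition Mprime : {set ({unit F} * {'GL_NN[F]})} := setX [set: {unit F}] Mbar.

Definition cuspidalMp (G : {group ({unit F} * {'GL_NN[F]})}) n
    (rho : mx_representation algC G n) : Prop :=
  forall wsA wsB, properFlags wsA wsB ->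
    rfix_mx rho (setX [set (1%g : {unit F})] (unipRad wsA wsB)) = 0.

End Sp.

(* epsilon : f^x -> {+-1}, the quadratic character (the unique surjective
   homomorphism onto {+-1} when |f| is odd), valued in algC *)
Definition eps (F : finFieldType) (z : {unit F}) : algC :=
  if [exists y : F, y ^+ 2 == val z] then 1 else -1.

From HB Require Import structures.
From mathcomp Require Import all_boot all_order all_algebra all_fingroup all_field all_character.
Set Implicit Arguments. Unset Strict Implicit. Unset Printing Implicit Defensive.
Import Order.TTheory GRing.Theory Num.Theory.
Local Open Scope ring_scope.

(* Since the central factor f^x acts by the scalar character eps, a
   representation rho of f^x x Mbar is eps tensored with its restriction
   sigma to 1 x Mbar.  Scalars preserve every subspace, so rho and sigma have
   the same submodules (hence sigma is irreducible), and the fixed vectors of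
   1 x U under rho are those of U under sigma (hence sigma is cuspidal). *)

Section ReprOfDirectProduct.

Variables (R : fieldType) (gT hT : finGroupType).
Variables (K : {group gT}) (H : {group hT}) (n : nat).
Variable rho : mx_representation R (setX K H)%G n.

Lemma mem_setX_pair (z : gT) (h : hT) : z \in K -> h \in H -> (z, h) \in setX K H.
Proof. by move=> Kz Hh; rewrite inE /= Kz Hh. Qed.

Lemma repr_mx_snd_repr : mx_repr H (fun h => rho (1%g, h)).
Proof.
split; first exact: repr_mx1.
move=> g h Hg Hh /=.
rewrite -(repr_mxM rho (mem_setX_pair (group1 K) Hg) (mem_setX_pair (group1 K) Hh)).
by rewrite -[((1, g) * (1, h))%g]/((1 * 1)%g, (g * h)%g) mulg1.
Qed.

Definition snd_repr : mx_representation R H n := MxRepresentation repr_mx_snd_repr.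

Lemma repr_mx_pair (z : gT) (h : hT) :
  z \in K -> h \in H -> rho (z, h) = rho (z, 1%g) *m snd_repr h.
Proof.
move=> Kz Hh.
rewrite -(repr_mxM rho (mem_setX_pair Kz (group1 H)) (mem_setX_pair (group1 K) Hh)).
by rewrite -[((z, 1) * (1, h))%g]/((z * 1)%g, (1 * h)%g) mulg1 mul1g.
Qed.

Lemma rfix_mx_setX1 (U : {set hT}) :
  (rfix_mx rho (setX [set 1%g] U) :=: rfix_mx snd_repr U)%MS.
Proof.
apply/eqmxP/andP; split; apply/rfix_mxP.
- by move=> h Uh; rewrite /= rfix_mx_id // inE /= set11.
- case=> z h /setXP[/set1P-> Uh].
  by rewrite -[rho _]/(snd_repr h) rfix_mx_id.
Qed.

Variable lambda : gT -> R.
Hypothesis rhoK_scalar : forall z, z \in K -> rho (z, 1%g) = (lambda z)%:M.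

Lemma mxmodule_snd_repr m (U : 'M_(m, n)) : mxmodule snd_repr U -> mxmodule rho U.
Proof.
move/mxmoduleP=> modU; apply/mxmoduleP => -[z h] /setXP[Kz Hh].
rewrite repr_mx_pair // rhoK_scalar // mulmxA mul_mx_scalar -scalemxAl.
exact/scalemx_sub/modU.
Qed.

Lemma mx_irr_snd_repr : mx_irreducible rho -> mx_irreducible snd_repr.
Proof.
case/mx_irrP=> n_gt0 irr_rho; apply/mx_irrP; split=> // U modU.
exact/irr_rho/mxmodule_snd_repr.
Qed.

End ReprOfDirectProduct.

(* [hchar], [hn] and [hM] are unused: the argument works for any group M and
   any scalar action of the central factor. *)
Theorem mainTheorem13 (F : finFieldType) (a b : nat)
  (hchar : 2%N \notin [pchar F]) (hn : (0 < a + b)%N)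
  (M : {group {'GL_(NN a b)[F]}}) (hM : M :=: Mbar F a b)
  (n : nat)
  (rho : mx_representation algC (setX [set: {unit F}] M)%G n)
  (hgen : forall z : {unit F}, rho (z, 1%g) = (eps z)%:M)
  (hirr : mx_irreducible rho)
  (hcusp : cuspidalMp rho) :
  exists sigma : mx_representation algC M n,
    [/\ mx_irreducible sigma, cuspidalM sigma &
        exists2 B : 'M[algC]_n, B \in unitmx &
          forall (z : {unit F}) (g : {'GL_(NN a b)[F]}), g \in M ->
            rho (z, g) *m B = B *m (eps z *: sigma g)].
Proof.
exists (snd_repr rho); split.
- exact: (mx_irr_snd_repr (fun z _ => hgen z)).
- move=> wsA wsB proper.
  by apply/eqP; rewrite -(eqmx_eq0 (rfix_mx_setX1 rho _)) hcusp.
- exists 1%:M => [|z g Mg]; first exact: unitmx1.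
  by rewrite mul1mx mulmx1 repr_mx_pair ?in_setT // hgen mul_scalar_mx.
Qed.
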